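(* Let $m\ge1$ and $L=\mathcal{R}^*$. For $a\in\mathcal{R}$ the Lee weight of $ev(a)=(Tr(ax))_{x\in \mathcal{R}^*}$ is: (a) $0$ if $a=0$; (b) $2\cdot3^{3m}$ if $a=(u-1)^2a_3$ with $a_3\in\mathbb{F}_{3^m}^*$; (c) $2(3^{3m}-3^{2m})$ if $a\in\mathcal{R}\setminus\langle (u-1)^2\rangle$.
   Context: Let $R=\mathbb{F}_3[u]/(u^3-1)$ and $\mathcal{R}=\mathbb{F}_{3^m}[u]/(u^3-1)=\mathbb{F}_{3^m}+u\mathbb{F}_{3^m}+u^2\mathbb{F}_{3^m}$. Every element of $\mathcal{R}$ is uniquely $x_1+x_2(u-1)+x_3(u-1)^2$ with $x_i\in\mathbb{F}_{3^m}$; $\mathcal{R}^*$ (the units) consists of those with $x_1\neq0$. $\langle (u-1)^2\rangle=\{(u-1)^2a_3:a_3\in\mathbb{F}_{3^m}\}$. $Tr:\mathcal{R}\to R$ is $Tr(a+ub+u^2c)=tr(a)+u\,tr(b)+u^2tr(c)$, with $tr$ the absolute trace $\mathbb{F}_{3^m}\to\mathbb{F}_3$. The Gray map $\phi:R\to\mathbb{F}_3^3$ is $\phi(a'+ub'+u^2c')=(a',b',c')$, extended coordinatewise to $R^n\to\mathbb{F}_3^{3n}$; the Lee weight $w_L(v)$ of $v\in R^n$ is the Hamming weight of $\phi(v)$. *)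

From HB Require Import structures.
From mathcomp Require Import all_boot all_order all_algebra all_field.
Set Implicit Arguments. Unset Strict Implicit. Unset Printing Implicit Defensive.
Import GRing.Theory.
Local Open Scope ring_scope.

(* The ring  calR = F[u]/(u^3-1), F = F_{3^m}, an element a + u b + u^2 c
   is represented by the triple ((a, b), c). *)
Definition calR (F : finFieldType) := (F * F * F)%type.

Definition oneR (F : finFieldType) : calR F := (1, 0, 0).

(* multiplication using u^3 = 1 *)
Definition mulR (F : finFieldType) (x y : calR F) : calR F :=
  let: (a, b, c) := x in let: (a', b', c') := y in
  (a * a' + b * c' + c * b', a * b' + b * a' + c * c', a * c' + b * b' + c * a').

Definition isUnitR (F : finFieldType) (x : calR F) : bool :=
  [exists y : calR F, mulR x y == oneR F].

(* x1 + x2 (u-1) + x3 (u-1)^2, with (u-1) = -1 + u and (u-1)^2 = 1 - 2u + u^2 *)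
Definition eltR (F : finFieldType) (x1 x2 x3 : F) : calR F :=
  (x1 - x2 + x3, x2 - x3 *+ 2, x3).

(* absolute trace F_{3^m} -> F_3, with values in the prime subfield of F *)
Definition tr (F : finFieldType) (m : nat) (x : F) : F :=
  \sum_(i < m) x ^+ (3 ^ i)%N.

Definition TrR (F : finFieldType) (m : nat) (x : calR F) : calR F :=
  let: (a, b, c) := x in (tr m a, tr m b, tr m c).

Definition gray (F : finFieldType) (x : calR F) : 3.-tuple F :=
  let: (a, b, c) := x in [tuple a; b; c].

Definition hamming (F : finFieldType) (n : nat) (v : n.-tuple F) : nat :=
  count (fun z => z != 0) v.

Definition lee_ev (F : finFieldType) (m : nat) (a : calR F) : nat :=
  \sum_(x : calR F | isUnitR x) hamming (gray (TrR m (mulR a x))).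

From HB Require Import structures.
From mathcomp Require Import all_boot all_order all_algebra all_field.
From mathcomp Require Import ring zify.
Set Implicit Arguments. Unset Strict Implicit. Unset Printing Implicit Defensive.
Import GRing.Theory.
Local Open Scope ring_scope.

(* In characteristic 3 we have u^3 - 1 = (u - 1)^3, so x = x1 + x2 (u-1) + x3 (u-1)^2
   is a unit iff its augmentation x(1) = x1 is nonzero.  Each coordinate of a x is an
   F-linear form in (x1, x2, x3), and multiplication by u permutes the coordinates
   cyclically, so the Lee weight is a sum of three counts of units on which the trace
   of the first coordinate is nonzero.  The trace takes values in F_3 and each of its
   fibres has at most 3^(m-1) elements (roots of a polynomial of degree 3^(m-1)), so
   exactly 2 3^(m-1) elements of F have nonzero trace.  For a = a3 (u-1)^2 the form
   is a3 x1; otherwise it involves x2 or x3, and summing over these free variables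
   makes it equidistributed. *)

Section AffineSums.
Variable F : finFieldType.
Implicit Types (f : F -> nat) (c d e k : F).

Lemma sum_affine f c e : e != 0 -> (\sum_y f (c + e * y)%R = \sum_y f y)%N.
Proof.
move=> e_neq0; rewrite [RHS](reindex_inj (h := fun y => c + e * y)) //.
by move=> y z /addrI /(mulfI e_neq0).
Qed.

Lemma sum_affine2 f c d e : (d != 0) || (e != 0) ->
  (\sum_y \sum_z f (c + d * y + e * z)%R = #|F| * \sum_y f y)%N.
Proof.
case/orP=> [d_neq0 | e_neq0].
  rewrite exchange_big /=.
  under eq_bigr => z _ do under eq_bigr => y _ do rewrite addrAC.
  under eq_bigr => z _ do rewrite sum_affine //.
  by rewrite sum_nat_const.
under eq_bigr => y _ do rewrite sum_affine //.
by rewrite sum_nat_const.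
Qed.

Lemma sum_nonzero_scale f k : f 0 = 0%N -> k != 0 ->
  (\sum_(x | x != 0%R) f (k * x)%R = \sum_y f y)%N.
Proof.
move=> f0 k_neq0; rewrite -(sum_affine f 0 k_neq0) [RHS](bigD1 0) //=.
by rewrite mulr0 addr0 f0 add0n; apply: eq_bigr => x _; rewrite add0r.
Qed.

End AffineSums.

Section GroupRing.
Variable F : finFieldType.
Implicit Types (x y : calR F) (p q r : F).

Definition augR x : F := x.1.1 + x.1.2 + x.2.

(* [normR x] is the determinant of the circulant matrix of multiplication by [x],
   and [invR x] is its adjugate divided by it. *)
Definition normR x : F :=
  let: (a, b, c) := x in a ^+ 3 + b ^+ 3 + c ^+ 3 - 3%:R * a * b * c.

Definition invR x : calR F :=
  let: (a, b, c) := x in let t := (normR x)^-1 in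
  (t * (a ^+ 2 - b * c), t * (c ^+ 2 - a * b), t * (b ^+ 2 - a * c)).

Definition rotR x : calR F := let: (a, b, c) := x in (c, a, b).

Definition coordR x : F * F * F := (augR x, x.1.2 + x.2 *+ 2, x.2).

Lemma augR_mul x y : augR (mulR x y) = augR x * augR y.
Proof. by case: x y => [[a b] c] [[a' b'] c']; rewrite /augR /=; ring. Qed.

Lemma mulR_invR x : normR x != 0 -> mulR x (invR x) = oneR F.
Proof.
case: x => [[a b] c] /=; set N := _ - _ => N_neq0; rewrite /oneR.
congr (_, _, _).
- by rewrite -(mulVf N_neq0) /N; ring.
- by rewrite -(mulr0 N^-1) /N; ring.
- by rewrite -(mulr0 N^-1) /N; ring.
Qed.

Lemma augR_eltR p q r : augR (eltR p q r) = p.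
Proof. by rewrite /augR /=; ring. Qed.

Lemma eltR_bij : bijective (fun t : F * F * F => eltR t.1.1 t.1.2 t.2).
Proof.
by exists coordR; case=> [[a b] c]; rewrite /coordR /augR /=; congr (_, _, _); ring.
Qed.

Lemma mulR_eltR_coord p q r (x1 x2 x3 : F) :
  (mulR (p, q, r) (eltR x1 x2 x3)).1.1 =
  p * x1 + (r - p) * x2 + (p + q - r *+ 2) * x3.
Proof. by rewrite /=; ring. Qed.

Lemma mulR_rotR x y : mulR (rotR x) y = rotR (mulR x y).
Proof. by case: x y => [[a b] c] [[a' b'] c'] /=; congr (_, _, _); ring. Qed.

Lemma rotR_const x k : rotR x = (k, k, k) -> x = (k, k, k).
Proof. by case: x => [[a b] c] [-> -> ->]. Qed.

Hypothesis char3 : 3%N \in [pchar F].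

Let mul3r0 (z : F) : 3%:R * z = 0.
Proof. by rewrite (pcharf0 char3) mul0r. Qed.

Lemma normR_pchar3 x : normR x = augR x ^+ 3.
Proof.
case: x => [[a b] c]; rewrite /augR /=.
transitivity ((a + b + c) ^+ 3 - 3%:R * (a * b * (a + b) + b * c * (b + c)
                 + c * a * (c + a) + 3%:R * a * b * c)); first by ring.
by rewrite mul3r0 subr0.
Qed.

Lemma isUnitR_augR x : isUnitR x = (augR x != 0).
Proof.
apply/existsP/idP => [[y /eqP xy1] | aug_neq0].
  apply/eqP => aug0; move: (augR_mul x y).
  by rewrite xy1 aug0 mul0r /augR /= !addr0 => /eqP; rewrite oner_eq0.
by exists (invR x); rewrite mulR_invR // normR_pchar3 expf_neq0.
Qed.

Lemma eltR00 p : eltR 0 0 p = (p, p, p).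
Proof.
rewrite /eltR subrr sub0r add0r; congr (_, _, _).
by transitivity (p - 3%:R * p); [ring | rewrite mul3r0 subr0].
Qed.

Lemma sum_isUnitR (G : calR F -> nat) :
  (\sum_(x | isUnitR x) G x =
   \sum_(x1 | x1 != 0%R) \sum_x2 \sum_x3 G (eltR x1 x2 x3))%N.
Proof.
rewrite (reindex _ (onW_bij _ eltR_bij)) /=.
rewrite (eq_bigl (fun t => t.1.1 != 0)) => [|t]; last by rewrite isUnitR_augR augR_eltR.
by rewrite [RHS]pair_big_dep [RHS]pair_big_dep; apply: eq_bigl => t; rewrite !andbT.
Qed.

End GroupRing.

Section CoordinateWeight.
Variables (F : finFieldType) (f : F -> nat).
Hypothesis char3 : 3%N \in [pchar F].

Definition coord_wt (a : calR F) : nat := \sum_(x | isUnitR x) f (mulR a x).1.1.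

Lemma coord_wt_const k : f 0 = 0%N -> k != 0 ->
  coord_wt (k, k, k) = (#|F| * #|F| * \sum_y f y)%N.
Proof.
move=> f0 k_neq0; rewrite /coord_wt sum_isUnitR //.
under eq_bigr => x1 _ do under eq_bigr => x2 _ do under eq_bigr => x3 _ do
  rewrite mulR_eltR_coord subrr -mulr2n subrr !mul0r !addr0.
rewrite -(sum_nonzero_scale f0 k_neq0) big_distrr /=; apply: eq_bigr => x1 _.
by rewrite !sum_nat_const mulnA.
Qed.

Lemma coord_wt_nonconst a : (forall k, a <> (k, k, k)) ->
  coord_wt a = (#|F|.-1 * #|F| * \sum_y f y)%N.
Proof.
case: a => [[p q] r] a_nonconst; rewrite /coord_wt sum_isUnitR //.
under eq_bigr => x1 _ do under eq_bigr => x2 _ do under eq_bigr => x3 _ do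
  rewrite mulR_eltR_coord.
have de_neq0 : (r - p != 0) || (p + q - r *+ 2 != 0).
  rewrite -negb_and !subr_eq0; apply: contra_notN (a_nonconst p).
  by case/andP=> /eqP-> /eqP; rewrite mulr2n => /addrI->.
under eq_bigr => x1 _ do rewrite sum_affine2 //.
by rewrite sum_nat_const cardC1 mulnA.
Qed.

End CoordinateWeight.

Definition tr_neq0 (F : finFieldType) m (x : F) : nat := tr m x != 0.

Lemma tr0 (F : finFieldType) m : tr m (0 : F) = 0.
Proof. by rewrite /tr big1 // => i _; rewrite expr0n expn_eq0. Qed.

Lemma lee_ev_coord_wt (F : finFieldType) m (a : calR F) :
  lee_ev m a = (coord_wt (tr_neq0 m) a + coord_wt (tr_neq0 m) (rotR (rotR a))
                + coord_wt (tr_neq0 m) (rotR a))%N.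
Proof.
rewrite /lee_ev /coord_wt -!big_split /=; apply: eq_bigr => x _.
rewrite !mulR_rotR; case: (mulR a x) => [[p q] r] /=.
by rewrite /hamming /= addn0 addnA.
Qed.

Lemma lee_ev0 (F : finFieldType) m : lee_ev m (0 : calR F) = 0%N.
Proof.
rewrite /lee_ev big1 // => -[[p q] r] _.
by rewrite /= !mul0r !addr0 tr0 /hamming /= eqxx.
Qed.

Definition trPoly (F : finFieldType) (m : nat) : {poly F} := \sum_(i < m) 'X^(3 ^ i).

Lemma size_trPoly (F : finFieldType) n : size (trPoly F n.+1) = (3 ^ n).+1.
Proof.
elim: n => [|n IHn]; first by rewrite /trPoly big_ord1 expn0 size_polyX.
rewrite /trPoly big_ord_recr /= -/(trPoly F n.+1) addrC size_polyDl size_polyXn //.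
by rewrite IHn ltnS ltn_exp2l.
Qed.

Lemma horner_trPoly (F : finFieldType) m (x : F) : (trPoly F m).[x] = tr m x.
Proof. by rewrite /trPoly horner_sum; apply: eq_bigr => i _; rewrite hornerXn. Qed.

Section FieldOfOrder3Pow.
Variables (F : finFieldType) (n : nat).
Hypothesis cardF : #|F| = (3 ^ n.+1)%N.
Implicit Types (x v : F).

Let char3 : 3%N \in [pchar F]. Proof. exact: card_finPcharP cardF _. Qed.

Lemma card_tr_eq_le v : (#|[set x | tr n.+1 x == v]| <= 3 ^ n)%N.
Proof.
set p := trPoly F n.+1 - v%:P.
have size_p : size p = (3 ^ n).+1.
  rewrite size_polyDl size_trPoly // size_polyN.
  by apply: leq_ltn_trans (size_polyC_leq1 v) _; rewrite ltnS expn_gt0.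
have p_neq0 : p != 0 by rewrite -size_poly_eq0 size_p.
rewrite -ltnS -size_p cardE; apply: max_poly_roots p_neq0 _ (enum_uniq _).
apply/allP => x; rewrite mem_enum inE => /eqP trx.
by rewrite /root hornerD hornerN hornerC horner_trPoly trx subrr.
Qed.

Lemma tr_cube x : tr n.+1 x ^+ 3 = tr n.+1 x.
Proof.
rewrite /tr -(pFrobenius_autE char3) rmorph_sum /=.
under eq_bigr => i _ do rewrite pFrobenius_autE -exprM -expnSr.
by rewrite big_ord_recr big_ord_recl /= -cardF expf_card expn0 expr1 addrC.
Qed.

Lemma tr_F3 x : [\/ tr n.+1 x = 0, tr n.+1 x = 1 | tr n.+1 x = -1].
Proof.
have : tr n.+1 x * (tr n.+1 x - 1) * (tr n.+1 x + 1) = 0.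
  by rewrite -mulrA -subr_sqr expr1n mulrBr -exprS tr_cube mulr1 subrr.
move/eqP; rewrite !mulf_eq0 subr_eq0 addr_eq0 => /orP[/orP[] | ] /eqP.
- exact: Or31.
- exact: Or32.
- exact: Or33.
Qed.

Lemma card_tr_neq0 : #|[set x : F | tr n.+1 x != 0]| = (2 * 3 ^ n)%N.
Proof.
apply/eqP; rewrite eqn_leq; apply/andP; split.
  have -> : [set x : F | tr n.+1 x != 0] =
      [set x | tr n.+1 x == 1] :|: [set x | tr n.+1 x == -1].
    apply/setP => x; rewrite !inE; case: (tr_F3 x) => ->; rewrite eqxx.
    - by rewrite !(eq_sym 0) oner_eq0 oppr_eq0 oner_eq0.
    - by rewrite oner_eq0.
    - by rewrite oppr_eq0 oner_eq0 orbT.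
  apply: leq_trans (leq_card_setU _ _).1 _; rewrite mul2n -addnn.
  by rewrite leq_add ?card_tr_eq_le.
have -> : [set x : F | tr n.+1 x != 0] = ~: [set x | tr n.+1 x == 0].
  by apply/setP => x; rewrite !inE.
rewrite -(leq_add2l #|[set x : F | tr n.+1 x == 0]|) cardsC cardF expnS mulSn.
by rewrite leq_add2r card_tr_eq_le.
Qed.

Lemma sum_tr_neq0 : (3 * \sum_(x : F) tr_neq0 n.+1 x = 2 * #|F|)%N.
Proof.
rewrite cardF expnS mulnCA -card_tr_neq0 -sum1_card [in RHS]big_mkcond /=.
by congr (3 * _)%N; apply: eq_bigr => x _; rewrite inE.
Qed.

Lemma lee_ev_const (k : F) : k != 0 ->
  lee_ev n.+1 (k, k, k) = (2 * #|F| ^ 3)%N.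
Proof.
move=> k_neq0; rewrite lee_ev_coord_wt /= !coord_wt_const ?/tr_neq0 ?tr0 ?eqxx //.
by transitivity (#|F| * #|F| * (3 * \sum_(x : F) tr_neq0 n.+1 x))%N;
  [ring | rewrite sum_tr_neq0; ring].
Qed.

Lemma lee_ev_nonconst (a : calR F) : (forall k, a <> (k, k, k)) ->
  lee_ev n.+1 a = (2 * (#|F| ^ 3 - #|F| ^ 2))%N.
Proof.
move=> a_nonconst; have rot_nonconst k : rotR a <> (k, k, k).
  by move/rotR_const; apply: a_nonconst.
have rot2_nonconst k : rotR (rotR a) <> (k, k, k).
  by move/rotR_const; apply: rot_nonconst.
rewrite lee_ev_coord_wt !coord_wt_nonconst //.
have -> : (#|F| ^ 3 - #|F| ^ 2 = #|F| ^ 2 * #|F|.-1)%N.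
  by rewrite -subn1 mulnBr muln1 -expnSr.
by transitivity (#|F|.-1 * #|F| * (3 * \sum_(x : F) tr_neq0 n.+1 x))%N;
  [ring | rewrite sum_tr_neq0; ring].
Qed.

End FieldOfOrder3Pow.

Theorem theorem5p5 (F : finFieldType) (m : nat) (hm : (1 <= m)%N)
  (hF : #|F| = (3 ^ m)%N) :
  [/\ lee_ev m (0 : calR F) = 0%N,
      (forall a3 : F, a3 != 0 ->
         lee_ev m (eltR 0 0 a3) = (2 * 3 ^ (3 * m))%N)
    & (forall a : calR F, (forall a3 : F, a <> eltR 0 0 a3) ->
         lee_ev m a = (2 * (3 ^ (3 * m) - 3 ^ (2 * m)))%N)].
Proof.
case: m hm hF => [//|n] _ cardF.
have char3 : 3%N \in [pchar F] by apply: card_finPcharP cardF _.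
rewrite !(mulnC _ n.+1) !expnM -cardF; split.
- exact: lee_ev0.
- by move=> k k_neq0; rewrite eltR00 // lee_ev_const.
- by move=> a a_nonconst; apply: lee_ev_nonconst => // k; rewrite -eltR00.
Qed.
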